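(* Let $M$ be a connected molecular graph (i.e. a connected simple graph with maximum vertex degree at most $4$) with $n\geq 3$ vertices, and let $G\cong L(M)$ be its line graph. Then $GA(G)>ABC(G)$.
   Context: All graphs are finite, simple and undirected. For a graph $G$ with vertex degrees $d_i$ (degree of vertex $v_i$), the first geometric-arithmetic index is $GA(G)=\sum_{v_iv_j\in E(G)}\frac{2\sqrt{d_id_j}}{d_i+d_j}$ and the atom-bond connectivity index is $ABC(G)=\sum_{v_iv_j\in E(G)}\sqrt{\frac{d_i+d_j-2}{d_id_j}}$. The line graph $L(M)$ has vertex set $E(M)$, two vertices being adjacent iff the corresponding edges of $M$ share an endpoint. *)

From HB Require Import structures.
From mathcomp Require Import all_boot all_order all_algebra.
Set Implicit Arguments. Unset Strict Implicit. Unset Printing Implicit Defensive.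
Import Order.TTheory GRing.Theory Num.Theory.
Local Open Scope ring_scope.

Definition simple_graph (T : finType) (e : rel T) : Prop :=
  symmetric e /\ irreflexive e.

Definition deg (T : finType) (e : rel T) (x : T) : nat := #|[set y | e x y]|.

Definition connected_graph (T : finType) (e : rel T) : Prop :=
  forall x y : T, connect e x y.

(* Sum over the edges of a simple graph of a symmetric edge weight:
   each edge {x,y} is counted once (ordered pairs counted twice, halved). *)
Definition edge_sum (R : rcfType) (T : finType) (e : rel T)
    (w : nat -> nat -> R) : R :=
  2^-1 * \sum_(x : T) \sum_(y : T | e x y) w (deg e x) (deg e y).

Definition GA (R : rcfType) (T : finType) (e : rel T) : R :=
  edge_sum e (fun di dj : nat =>
    2 * Num.sqrt (di%:R * dj%:R) / (di%:R + dj%:R)).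

Definition ABC (R : rcfType) (T : finType) (e : rel T) : R :=
  edge_sum e (fun di dj : nat =>
    Num.sqrt ((di%:R + dj%:R - 2) / (di%:R * dj%:R))).

Definition edge_set (T : finType) (e : rel T) : {set {set T}} :=
  [set E | [exists x, exists y, e x y && (E == [set x; y])]].

Definition line_vertex (T : finType) (e : rel T) : finType :=
  {E : {set T} | E \in edge_set e}.

Definition line_adj (T : finType) (e : rel T) : rel (line_vertex e) :=
  fun E F => (E != F) && (val E :&: val F != set0).

(* GA(G) - ABC(G) is half the sum, over ordered pairs (x, y) of adjacent
   vertices of G, of the gap between the two edge weights at the degrees
   (d_x, d_y).  In the line graph of a graph of maximum degree 4 all degrees are
   at most 6, a pendant vertex has a neighbour of degree at most 4, and a vertex
   of degree 4 has at most one pendant neighbour.  The gap is at least 1/8 when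
   both degrees lie in [2,6] and positive on pendant edges, except on edges of
   degree type (1,4), where it still exceeds -1/10.  Moving 1/5 from the degree-4
   end of each such edge to its pendant end makes the share of every
   non-isolated vertex positive, so the sum is positive. *)

From HB Require Import structures.
From mathcomp Require Import all_boot all_order all_algebra.
From mathcomp Require Import lra zify.
Set Implicit Arguments. Unset Strict Implicit. Unset Printing Implicit Defensive.
Import Order.TTheory GRing.Theory Num.Theory.
Local Open Scope ring_scope.

Section Weights.
Variable R : rcfType.

Definition ga_weight (a b : nat) : R :=
  2 * Num.sqrt (a%:R * b%:R) / (a%:R + b%:R).
Definition abc_weight (a b : nat) : R :=
  Num.sqrt ((a%:R + b%:R - 2) / (a%:R * b%:R)).
Definition weight_gap (a b : nat) : R := ga_weight a b - abc_weight a b.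

Lemma weight_gapC (a b : nat) : weight_gap a b = weight_gap b a.
Proof.
by rewrite /weight_gap /ga_weight /abc_weight [a%:R + _]addrC [a%:R * _]mulrC.
Qed.

Lemma ga_weight_ge (a b : nat) (r : R) : (0 < a)%N -> (0 < b)%N -> 0 <= r ->
  (r * (a%:R + b%:R)) ^+ 2 <= 4 * (a%:R * b%:R) -> r <= ga_weight a b.
Proof.
move=> a_gt0 b_gt0 r_ge0 hr.
have ha : 0 < (a%:R : R) by rewrite ltr0n.
have hb : 0 < (b%:R : R) by rewrite ltr0n.
rewrite /ga_weight ler_pdivlMr; last by lra.
set t := Num.sqrt _.
have t_ge0 : 0 <= t := sqrtr_ge0 _.
have tE : t ^+ 2 = a%:R * b%:R by rewrite sqr_sqrtr // mulr_ge0 // ltW.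
have : 0 <= r * (a%:R + b%:R) by rewrite mulr_ge0 //; lra.
rewrite -tE in hr; nra.
Qed.

Lemma abc_weight_le (a b : nat) (q : R) : (0 < a)%N -> (0 < b)%N -> 0 <= q ->
  a%:R + b%:R - 2 <= q ^+ 2 * (a%:R * b%:R) -> abc_weight a b <= q.
Proof.
move=> a_gt0 b_gt0 q_ge0 hq.
rewrite /abc_weight -(ger0_norm q_ge0) -sqrtr_sqr ler_wsqrtr //.
by rewrite ler_pdivrMr // mulr_gt0 // ltr0n.
Qed.

Lemma weight_gap_ge (a b : nat) (r q : R) : (0 < a)%N -> (0 < b)%N ->
  0 <= r -> 0 <= q ->
  (r * (a%:R + b%:R)) ^+ 2 <= 4 * (a%:R * b%:R) ->
  a%:R + b%:R - 2 <= q ^+ 2 * (a%:R * b%:R) -> r - q <= weight_gap a b.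
Proof.
move=> a_gt0 b_gt0 r_ge0 q_ge0 hr hq.
by rewrite lerB ?ga_weight_ge ?abc_weight_le.
Qed.

(* On [2,6]^2 the GA weight is at least 17/20 (attained near (2,6)) and the
   ABC weight at most 71/100 (attained near (2,2)). *)
Lemma weight_gap_inner (a b : nat) :
  (2 <= a <= 6)%N -> (2 <= b <= 6)%N -> 1/8 <= weight_gap a b.
Proof.
case: a => [|[|[|[|[|[|[|a]]]]]]] // _; case: b => [|[|[|[|[|[|[|b]]]]]]] // _;
by apply: le_trans (weight_gap_ge (r := 17/20) (q := 71/100) _ _ _ _ _ _) => //;
  lra.
Qed.

Lemma weight_gap_pendant_gt0 (b : nat) : (1 <= b <= 3)%N -> 0 < weight_gap 1 b.
Proof.
case: b => [|[|[|[|b]]]] // _;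
by apply: lt_le_trans (weight_gap_ge (r := 17/20) (q := 41/50) _ _ _ _ _ _) => //;
  lra.
Qed.

Lemma weight_gap_1_4 : -(1/10) <= weight_gap 1 4.
Proof.
by apply: le_trans (weight_gap_ge (r := 4/5) (q := 9/10) _ _ _ _ _ _) => //; lra.
Qed.

(* The only negative weight gap that can occur, on an edge joining a pendant
   vertex to a vertex of degree 4, is compensated by moving 1/5 along it. *)
Definition pendant_transfer (a b : nat) : R :=
  if (a == 1%N) && (b == 4%N) then 1/5 else 0.

Definition balanced_gap (a b : nat) : R :=
  weight_gap a b + pendant_transfer a b - pendant_transfer b a.

Lemma balanced_gap_gt0 (a b : nat) :
  (1 <= a <= 6)%N -> (1 <= b <= 6)%N ->
  (a == 1%N -> b <= 4)%N -> (b == 1%N -> a <= 4)%N ->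
  ~~ ((a == 4) && (b == 1))%N ->
  0 < balanced_gap a b.
Proof.
rewrite /balanced_gap /pendant_transfer.
case: a => [|[|a]] // a_le6; case: b => [|[|b]] // b_le6 ha hb not41 /=.
- by have := weight_gap_pendant_gt0 (b := 1) isT; lra.
- have : (b <= 2)%N by have := ha isT; lia.
  case: b {ha hb not41 b_le6} => [|[|[|b]]] // _ /=.
  + by have := weight_gap_pendant_gt0 (b := 2) isT; lra.
  + by have := weight_gap_pendant_gt0 (b := 3) isT; lra.
  + by have := weight_gap_1_4; lra.
- have : (a <= 1)%N by have := hb isT; lia.
  rewrite weight_gapC; case: a {ha hb not41 a_le6} => [|[|a]] // _ /=.
  + by have := weight_gap_pendant_gt0 (b := 2) isT; lra.
  + by have := weight_gap_pendant_gt0 (b := 3) isT; lra.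
- by have := @weight_gap_inner a.+2 b.+2 a_le6 b_le6; lra.
Qed.

Lemma balanced_gap_4_1 : -(3/10) <= balanced_gap 4 1.
Proof.
rewrite /balanced_gap /pendant_transfer weight_gapC /=.
by have := weight_gap_1_4; lra.
Qed.

Lemma balanced_gap_4_inner (k : nat) : (2 <= k <= 6)%N -> 1/8 <= balanced_gap 4 k.
Proof.
move=> hk; have := @weight_gap_inner 4 k isT hk.
by rewrite /balanced_gap /pendant_transfer; case: k hk => [|[|k]] //= _; lra.
Qed.
End Weights.

Lemma deg_gt0 (T : finType) (e : rel T) (x y : T) : e x y -> (0 < deg e x)%N.
Proof. by move=> hxy; apply/card_gt0P; exists y; rewrite inE. Qed.

Lemma deg_bij_transport (U V : finType) (g : rel U) (h : rel V) (f : U -> V) :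
  bijective f -> (forall u v, g u v = h (f u) (f v)) ->
  forall u, deg g u = deg h (f u).
Proof.
move=> [f' fK f'K] hg u; rewrite /deg -(card_imset _ (can_inj fK)).
suff -> : f @: [set v | g u v] = [set w | h (f u) w] by [].
apply/setP => w; rewrite inE; apply/imsetP/idP.
  by case=> v + ->; rewrite inE hg.
by move=> huw; exists (f' w); rewrite ?inE ?hg f'K.
Qed.

Section DegreeConditions.
Variables (R : rcfType) (U : finType) (g : rel U).
Hypothesis gsym : symmetric g.
Hypothesis deg_le6 : forall u, (deg g u <= 6)%N.
Hypothesis pendant_nbr_deg_le4 :
  forall u v, g u v -> deg g u = 1%N -> (deg g v <= 4)%N.
Hypothesis deg4_pendant_nbr_uniq : forall u v w, deg g u = 4%N ->
  g u v -> g u w -> deg g v = 1%N -> deg g w = 1%N -> v = w.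

Let charge (x : U) : R :=
  \sum_(y | g x y) balanced_gap R (deg g x) (deg g y).

Let has_pendant_nbr (x : U) : bool := [exists y, g x y && (deg g y == 1%N)].

Lemma balanced_gap_edge_gt0 (x y : U) : g x y ->
  ~~ ((deg g x == 4%N) && has_pendant_nbr x) ->
  0 < balanced_gap R (deg g x) (deg g y).
Proof.
move=> hxy not_special; have hyx : g y x by rewrite gsym.
apply: balanced_gap_gt0.
- by rewrite (deg_gt0 hxy) deg_le6.
- by rewrite (deg_gt0 hyx) deg_le6.
- by move=> /eqP; apply: pendant_nbr_deg_le4.
- by move=> /eqP; apply: pendant_nbr_deg_le4.
- apply: contra not_special => /andP[-> dy1]; apply/existsP; exists y.
  by rewrite hxy dy1.
Qed.

(* A degree-4 vertex pays 1/5 to its unique pendant neighbour, but each of its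
   three other neighbours has degree in [2,6] and contributes at least 1/8. *)
Lemma charge_special_gt0 (x : U) :
  deg g x = 4%N -> has_pendant_nbr x -> 0 < charge x.
Proof.
move=> dx4 /existsP[y /andP[hxy /eqP dy1]].
rewrite /charge (eq_bigl (fun z => z \in [set z | g x z])); last first.
  by move=> z; rewrite inE.
rewrite (big_setD1 y) ?inE //= dx4 dy1.
have card_rest : #|[set z | g x z] :\ y| = 3%N.
  by have := cardsD1 y [set z | g x z]; rewrite inE hxy -/(deg g x) dx4; lia.
have : \sum_(z in [set z | g x z] :\ y) (1/8 : R) <=
       \sum_(z in [set z | g x z] :\ y) balanced_gap R 4 (deg g z).
  apply: ler_sum => z; rewrite !inE => /andP[zy hxz]; apply: balanced_gap_4_inner.
  have : deg g z != 1%N.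
    by apply: contra zy => /eqP dz1; rewrite (deg4_pendant_nbr_uniq dx4 hxz hxy).
  by have := deg_le6 z; have := @deg_gt0 _ g z x; rewrite gsym hxz; lia.
rewrite sumr_const card_rest -mulr_natr.
by have := @balanced_gap_4_1 R; lra.
Qed.

Lemma charge_gt0 (x y : U) : g x y -> 0 < charge x.
Proof.
move=> hxy; have [/andP[/eqP dx4 hp]|not_special] :=
  boolP ((deg g x == 4%N) && has_pendant_nbr x).
  exact: charge_special_gt0.
rewrite /charge (bigD1 y) //=; apply: ltr_wpDr.
  by apply: sumr_ge0 => z /andP[hxz _]; apply/ltW/balanced_gap_edge_gt0.
exact: balanced_gap_edge_gt0.
Qed.

Lemma charge_ge0 (x : U) : 0 <= charge x.
Proof.
case: (pickP (g x)) => [y hxy|no_nbr]; first exact/ltW/(charge_gt0 hxy).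
by rewrite /charge big_pred0.
Qed.

Lemma sum_charge :
  \sum_x charge x = \sum_x \sum_(y | g x y) weight_gap R (deg g x) (deg g y).
Proof.
have transfer_sym :
    \sum_x \sum_(y | g x y) pendant_transfer R (deg g x) (deg g y) =
    \sum_x \sum_(y | g x y) pendant_transfer R (deg g y) (deg g x).
  rewrite [RHS](exchange_big_dep predT) //=.
  by apply: eq_bigr => x _; apply: eq_bigl => y; rewrite gsym.
rewrite /charge /balanced_gap.
under eq_bigr do rewrite sumrB big_split.
by rewrite sumrB big_split transfer_sym addrK.
Qed.

Lemma ABC_lt_GA_of_degrees (x0 y0 : U) : g x0 y0 -> ABC R g < GA R g.
Proof.
move=> hxy0; rewrite -subr_gt0.
have -> : GA R g - ABC R g =
    2^-1 * \sum_x \sum_(y | g x y) weight_gap R (deg g x) (deg g y).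
  rewrite /GA /ABC /edge_sum -mulrBr -sumrB; congr (_ * _).
  by apply: eq_bigr => x _; rewrite -sumrB.
rewrite -sum_charge mulr_gt0 ?invr_gt0 ?ltr0n // (bigD1 x0) //=.
apply: ltr_wpDr; last exact: charge_gt0 hxy0.
by apply: sumr_ge0 => x _; apply: charge_ge0.
Qed.
End DegreeConditions.

Lemma line_adj_sym (T : finType) (e : rel T) : symmetric (@line_adj T e).
Proof. by move=> E F; rewrite /line_adj eq_sym setIC. Qed.

Lemma set2_injr (T : finType) (a y z : T) :
  y != a -> [set a; y] = [set a; z] -> y = z.
Proof.
move=> ya h; have := set22 a y; rewrite h => /set2P[ya'|//].
by rewrite ya' eqxx in ya.
Qed.

Lemma mem_card_le2 (T : finType) (A : {set T}) (x y z : T) : (#|A| <= 2)%N ->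
  x \in A -> y \in A -> z \in A -> x != y -> z = x \/ z = y.
Proof.
move=> hA xA yA zA xy; have [->|zx] := eqVneq z x; [by left|right].
have /card_le1_eqP : (#|A :\ x| <= 1)%N.
  by move: hA; rewrite (cardsD1 x A) xA; lia.
by apply; rewrite !inE ?zx ?zA // eq_sym xy.
Qed.

Lemma exists_notin (T : finType) (A : {set T}) :
  (#|A| < #|T|)%N -> exists w, w \notin A.
Proof.
rewrite -cardsT => hA; have /properP[_ [w _ hw]] : A \proper setT.
  by rewrite properEcard subsetT.
by exists w.
Qed.

Section LineGraph.
Variables (T : finType) (e : rel T).
Hypothesis esym : symmetric e.
Hypothesis eirr : irreflexive e.

Local Notation L := (line_vertex e).
Local Notation nbrs x := [set y | e x y].
Local Notation degL := (deg (@line_adj T e)).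

Lemma edge_set2 (a b : T) : e a b -> [set a; b] \in edge_set e.
Proof.
by move=> hab; rewrite inE; apply/existsP; exists a; apply/existsP; exists b;
  rewrite hab eqxx.
Qed.

Lemma line_vertexP (E : L) : exists a b, e a b /\ val E = [set a; b].
Proof.
have := valP E; rewrite inE => /existsP[a /existsP[b /andP[hab /eqP hE]]].
by exists a, b.
Qed.

Let star a b := [set [set a; y] | y in nbrs a :\ b].

Lemma card_star (a b : T) : e a b -> #|star a b| = (deg e a).-1.
Proof.
move=> hab; rewrite card_in_imset.
  by rewrite /deg (cardsD1 b (nbrs a)) inE hab.
move=> y z; rewrite !inE => /andP[_ hay] _; apply: set2_injr.
by apply: contraTneq hay => ->; rewrite eirr.
Qed.

Section AtEdge.
Variables (E : L) (a b : T).
Hypotheses (hab : e a b) (hE : val E = [set a; b]).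

Lemma edge_in_line_nbrs (x y : T) : e x y -> x \in [set a; b] ->
  [set x; y] != [set a; b] -> [set x; y] \in val @: [set F | line_adj E F].
Proof.
move=> hxy xab hne; apply/imsetP; exists (Sub [set x; y] (edge_set2 hxy)) => //.
rewrite inE /line_adj -val_eqE SubK hE eq_sym hne /=.
by apply/set0Pn; exists x; rewrite in_setI set21 xab.
Qed.

Lemma star_sub_line_nbrs (a' b' : T) : [set a'; b'] = [set a; b] -> e a' b' ->
  star a' b' \subset val @: [set F | line_adj E F].
Proof.
move=> hab' ha'b'; apply/subsetP => X /imsetP[y].
rewrite !inE => /andP[yb ha'y] ->.
have ya' : y != a' by apply: contraTneq ha'y => ->; rewrite eirr.
apply: edge_in_line_nbrs => //; first by rewrite -hab' set21.
by rewrite -hab'; apply: contra yb => /eqP/(set2_injr ya') ->.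
Qed.

Lemma line_nbrs_val : val @: [set F | line_adj E F] = star a b :|: star b a.
Proof.
have sub_ab : star a b \subset val @: [set F | line_adj E F].
  exact: star_sub_line_nbrs.
have sub_ba : star b a \subset val @: [set F | line_adj E F].
  by apply: star_sub_line_nbrs; rewrite 1?esym // setUC.
apply/eqP; rewrite eqEsubset subUset sub_ab sub_ba !andbT.
apply/subsetP => X /imsetP[F]; rewrite inE => /andP[hne hint] ->.
have [x [y [hxy hF]]] := line_vertexP F.
have hne' : [set x; y] != [set a; b] by rewrite -hF -hE eq_sym val_eqE.
case/set0Pn: hint => z; rewrite inE hE hF => /andP[zab zxy].
wlog zx : x y hxy hF hne' zxy / z = x.
  move=> hwlog; case/set2P: zxy => [zx|zy].
    by apply: (hwlog x y) => //; rewrite zx set21.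
  by rewrite setUC; apply: (hwlog y x); rewrite 1?esym ?zy ?set21 // setUC.
subst z; rewrite inE; case/set2P: zab => ?; subst x; apply/orP; [left|right];
  apply/imsetP; exists y => //; rewrite !inE hxy andbT;
  apply: contra hne' => /eqP->; first by [].
by rewrite setUC.
Qed.

Lemma deg_line_graph : (degL E + 2 = deg e a + deg e b)%N.
Proof.
have disj : star a b :&: star b a = set0.
  apply/setP => X; rewrite !inE; apply/negP => /andP[].
  move=> /imsetP[y1 hy1 ->] /imsetP[y2 _ h].
  have := set21 b y2; rewrite -h => /set2P[ba|by1].
    by move: hab; rewrite ba eirr.
  by rewrite !inE by1 eqxx in hy1.
have hba : e b a by rewrite esym.
have := deg_gt0 hab; have := deg_gt0 hba.
rewrite [degL E]/deg -(card_imset _ val_inj) line_nbrs_val cardsU disj cards0.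
by rewrite subn0 !card_star //; lia.
Qed.
End AtEdge.

Lemma line_deg_le (k : nat) (E : L) :
  (forall x, deg e x <= k)%N -> (degL E <= k + k - 2)%N.
Proof.
move=> deg_le; have [a [b [hab hE]]] := line_vertexP E.
have := deg_line_graph hab hE; have := deg_le a; have := deg_le b; lia.
Qed.

Lemma line_pendant (F : L) : degL F = 1%N ->
  exists p q, [/\ e p q, val F = [set p; q], deg e p = 1%N & deg e q = 2%N].
Proof.
move=> dF; have [a [b [hab hF]]] := line_vertexP F.
have hba : e b a by rewrite esym.
have := deg_line_graph hab hF; have := deg_gt0 hab; have := deg_gt0 hba.
rewrite dF; have [da1|da1] := eqVneq (deg e a) 1%N => pb pa hsum.
  by exists a, b; split => //; lia.
by exists b, a; rewrite setUC; split => //; lia.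
Qed.

Lemma line_adj_pendant (F E : L) (p q : T) : e p q -> val F = [set p; q] ->
  deg e p = 1%N -> line_adj F E -> exists w, e q w /\ val E = [set q; w].
Proof.
move=> hpq hF dp /andP[hne hint].
have [x [y [hxy hE]]] := line_vertexP E.
case/set0Pn: hint => z; rewrite inE hF hE => /andP[zpq zxy].
wlog zx : x y hxy hE zxy / z = x.
  move=> hwlog; case/set2P: zxy => [zx|zy].
    by apply: (hwlog x y); rewrite // zx set21.
  by rewrite setUC; apply: (hwlog y x); rewrite 1?esym ?zy ?set21 // setUC.
subst z; case/set2P: zpq => ?; subst x; last by exists y.
have /card_le1_eqP nbrs_p : (#|nbrs p| <= 1)%N by rewrite -/(deg e p) dp.
have yq : y = q by apply: nbrs_p; rewrite inE.
by move: hne; rewrite -val_eqE hF hE yq eqxx.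
Qed.

Lemma line_pendant_nbr_deg (F E : L) : (forall x, deg e x <= 4)%N ->
  line_adj F E -> degL F = 1%N -> (degL E <= 4)%N.
Proof.
move=> deg_le4 + /line_pendant[p [q [hpq hF dp dq]]].
move=> /(line_adj_pendant hpq hF dp).
case=> w [hqw hE]; have := deg_line_graph hqw hE; have := deg_le4 w; lia.
Qed.

Lemma line_deg4_pendant_nbr_uniq (E F1 F2 : L) : degL E = 4%N ->
  line_adj E F1 -> line_adj E F2 -> degL F1 = 1%N -> degL F2 = 1%N -> F1 = F2.
Proof.
rewrite ![line_adj E _]line_adj_sym => dE adj1 adj2.
move=> /line_pendant[p1 [q1 [hpq1 hF1 dp1 dq1]]].
move=> /line_pendant[p2 [q2 [hpq2 hF2 dp2 dq2]]].
have [w1 [hqw1 hE1]] := line_adj_pendant hpq1 hF1 dp1 adj1.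
have [w2 [hqw2 hE2]] := line_adj_pendant hpq2 hF2 dp2 adj2.
have dw1 : deg e w1 = 4%N by have := deg_line_graph hqw1 hE1; lia.
have : q2 \in val E by rewrite hE2 set21.
rewrite hE1 => /set2P[q21|q2w1]; last by move: dq2; rewrite q2w1 dw1.
subst q2; have p1w1 : p1 != w1 by apply/eqP => p1w1; move: dp1; rewrite p1w1 dw1.
have nbrs_q1 : (#|nbrs q1| <= 2)%N by rewrite -/(deg e q1) dq1.
have p1_nbr : p1 \in nbrs q1 by rewrite inE esym.
have w1_nbr : w1 \in nbrs q1 by rewrite inE.
have p2_nbr : p2 \in nbrs q1 by rewrite inE esym.
have [p21|p2w1] := mem_card_le2 nbrs_q1 p1_nbr w1_nbr p2_nbr p1w1.
- by apply: val_inj; rewrite hF1 hF2 p21.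
- by move: dp2; rewrite p2w1 dw1.
Qed.

Lemma exists_two_nbrs : connected_graph e -> (3 <= #|T|)%N ->
  exists u y z, [/\ e u y, e u z & y != z].
Proof.
move=> hconn hT.
have [[[u y] z] /and3P[huy huz yz]|no_cherry] :=
  pickP [pred t : T * T * T | [&& e t.1.1 t.1.2, e t.1.1 t.2 & t.1.2 != t.2]].
  by exists u, y, z.
have nbr_uniq u y z : e u y -> e u z -> y = z.
  move=> huy huz; apply/eqP.
  by have := no_cherry (u, y, z); rewrite /= huy huz => /negbFE.
have /card_gt0P[x _] : (0 < #|T|)%N by lia.
have [w] := @exists_notin _ [set x] ltac:(rewrite cards1; lia).
rewrite inE => wx.
case/connectP: (hconn x w) => -[/= _ wx'|x1 p /= /andP[hxx1 _] _].
  by rewrite wx' eqxx in wx.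
have step u v : e u v -> u \in [set x; x1] -> v \in [set x; x1].
  move=> huv /set2P[] eq_u; rewrite eq_u in huv.
    by rewrite (nbr_uniq _ _ _ huv hxx1) set22.
  by rewrite (nbr_uniq x1 v x huv) ?set21 // esym.
have pair_closed : closed e [set x; x1].
  by move=> u v huv; apply/idP/idP; apply: step; rewrite // esym.
have [w' w'_out] := @exists_notin _ [set x; x1] ltac:(rewrite cards2; lia).
by have := closed_connect pair_closed (hconn x w'); rewrite set21 (negbTE w'_out).
Qed.

Lemma line_adj_exists : connected_graph e -> (3 <= #|T|)%N ->
  exists E F : L, line_adj E F.
Proof.
move=> hconn hT; have [u [y [z [huy huz yz]]]] := exists_two_nbrs hconn hT.
exists (Sub [set u; y] (edge_set2 huy)), (Sub [set u; z] (edge_set2 huz)).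
rewrite /line_adj -val_eqE !SubK; apply/andP; split.
  apply/eqP => h; have := set22 u z; rewrite -h => /set2P[zu|zy].
    by move: huz; rewrite zu eirr.
  by rewrite zy eqxx in yz.
by apply/set0Pn; exists u; rewrite in_setI !set21.
Qed.
End LineGraph.

Theorem theorem3p2 (R : rcfType) (T : finType) (e : rel T) :
  simple_graph e -> connected_graph e ->
  (forall x : T, (deg e x <= 4)%N) -> (3 <= #|T|)%N ->
  forall (U : finType) (g : rel U) (f : U -> line_vertex e),
    bijective f -> (forall u v : U, g u v = line_adj (f u) (f v)) ->
    ABC R g < GA R g.
Proof.
move=> [esym eirr] hconn deg_le4 hT U g f fbij hg.
have [f' fK f'K] := fbij.
have degU := deg_bij_transport fbij hg.
have gsym : symmetric g by move=> u v; rewrite !hg line_adj_sym.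
have [E [F hEF]] := line_adj_exists esym eirr hconn hT.
apply: (@ABC_lt_GA_of_degrees R U g gsym _ _ _ (f' E) (f' F)).
- by move=> u; rewrite degU; apply: (line_deg_le esym eirr _ deg_le4).
- by move=> u v; rewrite hg !degU; apply: line_pendant_nbr_deg.
- move=> u v w; rewrite !hg !degU => du4 huv huw dv1 dw1; apply: (can_inj fK).
  exact: (line_deg4_pendant_nbr_uniq esym eirr du4 huv huw).
- by rewrite hg !f'K.
Qed.
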